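(* Let $\mathcal L$ be a BQD and let $I\subset T(V\oplus W)$ be the ideal defining its shape algebra, with its $\mathbb N^2$-grading $I=\bigoplus I_{(k,\ell)}$. Then $\dim I_{(3,0)}=\dim I_{(0,3)}=17$ and $\dim I_{(2,1)}=\dim I_{(1,2)}=66$.
   Context: All vector spaces over $\mathbb C$; $TX$ is the tensor algebra; $\alpha\otimes\beta$ is the tensor product of linear maps, $1_X$ the identity; $\mathbb C\otimes X\cong X\cong X\otimes\mathbb C$. A BQD $\mathcal L$ consists of $3$-dimensional vector spaces $V,W$, linear maps $A:V\otimes V\to W$, $a:W\to V\otimes V$, $B:W\otimes W\to V$, $b:V\to W\otimes W$, $C:W\otimes V\to\mathbb C$, $c:\mathbb C\to V\otimes W$, $D:V\otimes W\to\mathbb C$, $d:\mathbb C\to W\otimes V$, and scalars $q,\omega$ with $q\neq0$, $q^2\neq-1$, $\omega^3=1$, such that, with $\kappa=q^{-2}+1+q^2$, $\rho=(q+q^{-1})^{-2}$: $(1_V\otimes C)(c\otimes 1_V)=1_V$; $(D\otimes 1_V)(1_V\otimes d)=1_V$; $Aa=1_W$; $C(A\otimes 1_V)=\omega D(1_V\otimes A)$; $(1_V\otimes a)c=\omega(a\otimes 1_V)d$; $(1_V\otimes D)(a\otimes 1_W)=B$; $\omega^2(1_W\otimes A)(d\otimes 1_V)=b$; $\omega(C\otimes 1_V)(1_W\otimes a)=B$; $(A\otimes 1_W)(1_V\otimes c)=b$; $Dc=\kappa$; $Cd=\kappa$; $(1_V\otimes A)(a\otimes 1_V)(A\otimes 1_V)(1_V\otimes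 a)=\rho(1_{V\otimes W}+cD)$; $(A\otimes 1_V)(1_V\otimes a)(1_V\otimes A)(a\otimes 1_V)=\rho(1_{W\otimes V}+dC)$; and either $q^2=1$ or $q^2$ is not a root of unity. Let $G:=(1_V\otimes A)(a\otimes 1_V):W\otimes V\to V\otimes W$. $I$ is the two-sided ideal of $T(V\oplus W)$ generated by $\operatorname{Im}a$, $\operatorname{Im}b$, $\operatorname{Im}c$ and all $w\otimes v+(q+q^{-1})G(w\otimes v)$ ($v\in V,w\in W$); $T(V\oplus W)$ is $\mathbb N^2$-graded with $V$ in degree $(1,0)$, $W$ in degree $(0,1)$, and $I$ is homogeneous. *)

From HB Require Import structures.
From mathcomp Require Import all_boot all_algebra.
From mathcomp Require Import reals complex.
Set Implicit Arguments. Unset Strict Implicit. Unset Printing Implicit Defensive.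
Import GRing.Theory.
Local Open Scope ring_scope.

(* Coordinates: V and W are identified with C^3 via chosen bases
   v_0,v_1,v_2 and w_0,w_1,w_2.  A linear map between tensor products of
   copies of V, W and C is recorded by its matrix coefficients:
     tA i j k = coefficient of w_k in A(v_i (x) v_j)
     ta k i j = coefficient of v_i (x) v_j in a(w_k)
     tB k l i = coefficient of v_i in B(w_k (x) w_l)
     tb i k l = coefficient of w_k (x) w_l in b(v_i)
     tC k i   = C(w_k (x) v_i)
     tc i k   = coefficient of v_i (x) w_k in c(1)
     tD i k   = D(v_i (x) w_k)
     td k i   = coefficient of w_k (x) v_i in d(1)                       *)

Definition kron (i j : 'I_3) {R : nzRingType} : R := (i == j)%:R.

Record BQD (R : realType) : Type := MkBQD {
  q : R[i]; om : R[i];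
  tA : 'I_3 -> 'I_3 -> 'I_3 -> R[i];
  ta : 'I_3 -> 'I_3 -> 'I_3 -> R[i];
  tB : 'I_3 -> 'I_3 -> 'I_3 -> R[i];
  tb : 'I_3 -> 'I_3 -> 'I_3 -> R[i];
  tC : 'I_3 -> 'I_3 -> R[i];
  tc : 'I_3 -> 'I_3 -> R[i];
  tD : 'I_3 -> 'I_3 -> R[i];
  td : 'I_3 -> 'I_3 -> R[i];
  q_neq0 : q != 0;
  q2_neqN1 : q ^+ 2 != -1;
  om3 : om ^+ 3 = 1;
  q_root : q ^+ 2 = 1 \/ (forall n : nat, (0 < n)%N -> (q ^+ 2) ^+ n != 1);
  (* (1_V (x) C)(c (x) 1_V) = 1_V *)
  ax1 : forall i j, \sum_(k : 'I_3) tc i k * tC k j = kron i j;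
  (* (D (x) 1_V)(1_V (x) d) = 1_V *)
  ax2 : forall i j, \sum_(k : 'I_3) tD i k * td k j = kron i j;
  (* A a = 1_W *)
  ax3 : forall k k', \sum_(i : 'I_3) \sum_(j : 'I_3) ta k i j * tA i j k' = kron k k';
  (* C (A (x) 1_V) = om D (1_V (x) A) *)
  ax4 : forall i j m, \sum_(k : 'I_3) tA i j k * tC k m
                      = om * \sum_(k : 'I_3) tA j m k * tD i k;
  (* (1_V (x) a) c = om (a (x) 1_V) d *)
  ax5 : forall i j m, \sum_(k : 'I_3) tc i k * ta k j m
                      = om * \sum_(k : 'I_3) td k m * ta k i j;
  (* (1_V (x) D)(a (x) 1_W) = B *)
  ax6 : forall k l i, \sum_(j : 'I_3) ta k i j * tD j l = tB k l i;
  (* om^2 (1_W (x) A)(d (x) 1_V) = b *)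
  ax7 : forall m k l, om ^+ 2 * \sum_(j : 'I_3) td k j * tA j m l = tb m k l;
  (* om (C (x) 1_V)(1_W (x) a) = B *)
  ax8 : forall k l j, om * \sum_(i : 'I_3) ta l i j * tC k i = tB k l j;
  (* (A (x) 1_W)(1_V (x) c) = b *)
  ax9 : forall m l k, \sum_(i : 'I_3) tc i k * tA m i l = tb m l k;
  (* D c = kappa *)
  ax10 : \sum_(i : 'I_3) \sum_(k : 'I_3) tD i k * tc i k = q ^- 2 + 1 + q ^+ 2;
  (* C d = kappa *)
  ax11 : \sum_(k : 'I_3) \sum_(i : 'I_3) tC k i * td k i = q ^- 2 + 1 + q ^+ 2;
  (* (1_V (x) A)(a (x) 1_V)(A (x) 1_V)(1_V (x) a) = rho (1_{V(x)W} + c D),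
     evaluated on v_i (x) w_k, coefficient of v_p (x) w_s *)
  ax12 : forall i k p s,
    \sum_(j : 'I_3) \sum_(m : 'I_3) \sum_(l : 'I_3) \sum_(r : 'I_3)
       ta k j m * tA i j l * ta l p r * tA r m s
    = ((q + q^-1) ^+ 2)^-1 * (kron i p * kron k s + tD i k * tc p s);
  (* (A (x) 1_V)(1_V (x) a)(1_V (x) A)(a (x) 1_V) = rho (1_{W(x)V} + d C),
     evaluated on w_k (x) v_i, coefficient of w_s (x) v_r *)
  ax13 : forall k i s r,
    \sum_(j : 'I_3) \sum_(m : 'I_3) \sum_(l : 'I_3) \sum_(p : 'I_3)
       ta k j m * tA m i l * ta l p r * tA j p s
    = ((q + q^-1) ^+ 2)^-1 * (kron k s * kron i r + tC k i * td s r)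
}.

(* Letters of the alphabet: basis of V (+) W; inl i = v_i, inr k = w_k. *)
Definition letter := ('I_3 + 'I_3)%type.

(* Elements of T(V (+) W): coefficient functions on words (monomials). *)
Definition tens (R : realType) := seq letter -> R[i].

Definition fin_supp (R : realType) (f : tens R) : Prop :=
  exists N : nat, forall w : seq letter, (N <= size w)%N -> f w = 0.

Definition tmul (R : realType) (f g : tens R) : tens R :=
  fun w => \sum_(j < (size w).+1) f (take j w) * g (drop j w).

Definition isV (x : letter) : bool := if x is inl _ then true else false.
Definition isW (x : letter) : bool := if x is inr _ then true else false.

Definition homog (R : realType) (k l : nat) (f : tens R) : Prop :=
  forall w, f w != 0 -> count isV w = k /\ count isW w = l.

Section Gens.
Variables (R : realType) (L : BQD R).

(* G = (1_V (x) A)(a (x) 1_V) : W (x) V -> V (x) W, coefficient of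
   v_p (x) w_s in G(w_l (x) v_m) *)
Definition Gco (l m p s : 'I_3) : R[i] :=
  \sum_(r : 'I_3) ta L l p r * tA L r m s.

(* a(w_k), spanning Im a *)
Definition gen_a (k : 'I_3) : tens R := fun w =>
  match w with [:: inl i; inl j] => ta L k i j | _ => 0 end.
(* b(v_m), spanning Im b *)
Definition gen_b (m : 'I_3) : tens R := fun w =>
  match w with [:: inr k; inr l] => tb L m k l | _ => 0 end.
(* c(1), spanning Im c *)
Definition gen_c : tens R := fun w =>
  match w with [:: inl i; inr k] => tc L i k | _ => 0 end.
(* w_l (x) v_m + (q + q^-1) G(w_l (x) v_m) *)
Definition gen_rel (l m : 'I_3) : tens R := fun w =>
  match w with
  | [:: inr l'; inl m'] => kron l' l * kron m' m
  | [:: inl p; inr s] => (q L + (q L)^-1) * Gco l m p s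
  | _ => 0 end.

(* By linearity, w (x) v + (q+q^-1) G(w (x) v) for all v, w is spanned by the
   basis cases, and Im a, Im b, Im c are spanned by images of bases. *)
Definition is_gen (g : tens R) : Prop :=
  (exists k, g = gen_a k) \/ (exists m, g = gen_b m) \/ g = gen_c \/
  (exists l m, g = gen_rel l m).

Inductive in_I : tens R -> Prop :=
  | in_I0 : in_I (fun _ => 0)
  | in_Iadd f g : in_I f -> in_I g -> in_I (fun w => f w + g w)
  | in_Igen x g y : fin_supp x -> fin_supp y -> is_gen g ->
      in_I (tmul (tmul x g) y)
  | in_Iext f g : in_I f -> (forall w, f w = g w) -> in_I g.

Definition I_comp (k l : nat) (f : tens R) : Prop := in_I f /\ homog k l f.

End Gens.

Definition has_dim (R : realType) (P : tens R -> Prop) (n : nat) : Prop :=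
  exists bas : 'I_n -> tens R,
    (forall j, P (bas j)) /\
    (forall cf : 'I_n -> R[i],
        (forall w, \sum_(j < n) cf j * bas j w = 0) -> forall j, cf j = 0) /\
    (forall f, P f -> exists cf : 'I_n -> R[i],
        forall w, f w = \sum_(j < n) cf j * bas j w).

From HB Require Import structures.
From mathcomp Require Import all_boot all_algebra.
From mathcomp Require Import reals complex.
From mathcomp Require Import ring.
Set Implicit Arguments. Unset Strict Implicit. Unset Printing Implicit Defensive.
Import GRing.Theory Num.Theory.
Local Open Scope ring_scope.

(* A degree-3 element of [I] is a combination of products [g (x) x] and
   [x (x) g] of a quadratic generator [g] with a letter [x], so in each
   bidegree it suffices to find a basis among these products.  In bidegree
   (3,0) the 18 products [a(w) (x) v] and [v (x) a(w)] satisfy exactly one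
   relation, [(1 (x) a) c = om (a (x) 1) d]: contracting a relation with [A]
   expresses each half through the other, and substituting back with [ax12]
   leaves only multiples of it because [rho <> 1].  Bidegree (0,3) is dual,
   with [b], [B] and [ax13].  In bidegree (2,1) the products [g (x) v] and
   [v (x) g] with [g] a relation [w (x) v + (q + q^-1) G (w (x) v)], together
   with [a(w) (x) w] and [v (x) c], form a basis of 66 elements: evaluating on
   words of shape [w v v], [v w v], [v v w] makes independence triangular,
   the last step resting on [kappa <> 1], and the remaining products
   [c (x) v] and [w (x) a(w)] are rewritten with the BQD identities.
   Bidegree (1,2) is symmetric. *)

Section DeltaSums.
Variables (K : pzSemiRingType) (I : finType) (F : I -> K) (j : I).

Lemma sum_delta_r : \sum_i F i * (i == j)%:R = F j.
Proof.
rewrite (bigD1 j) //= eqxx mulr1 big1 ?addr0 // => i /negbTE ->; exact: mulr0.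
Qed.

Lemma sum_delta_r' : \sum_i F i * (j == i)%:R = F j.
Proof. by rewrite -sum_delta_r; apply: eq_bigr => i _; rewrite eq_sym. Qed.

Lemma sum_delta_l : \sum_i (j == i)%:R * F i = F j.
Proof.
rewrite (bigD1 j) //= eqxx mul1r big1 ?addr0 // => i /negbTE.
by rewrite eq_sym => ->; exact: mul0r.
Qed.

Lemma sum_delta_l' : \sum_i (i == j)%:R * F i = F j.
Proof. by rewrite -sum_delta_l; apply: eq_bigr => i _; rewrite eq_sym. Qed.

End DeltaSums.

Lemma sum_delta3 (K : pzSemiRingType) (I J H : finType) (F : I -> J -> H -> K) i j h :
  \sum_i' \sum_j' \sum_h' F i' j' h' * ((i == i')%:R * (j == j')%:R * (h == h')%:R)
  = F i j h.
Proof.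
rewrite -(sum_delta_r' (fun i' => F i' j h) i); apply: eq_bigr => i' _.
rewrite -(sum_delta_r' (fun j' => F i' j' h * (i == i')%:R) j); apply: eq_bigr => j' _.
rewrite -(sum_delta_r' (fun h' => F i' j' h' * (i == i')%:R * (j == j')%:R) h).
by apply: eq_bigr => h' _; rewrite !mulrA.
Qed.

Section Span.
Variables (K : pzRingType) (X : Type) (T : finType) (S : pred T) (fam : T -> X -> K).

Definition in_span (h : X -> K) :=
  exists cf : T -> K, forall x, h x = \sum_(t in S) cf t * fam t x.

Lemma in_span_ext h h' : in_span h -> h =1 h' -> in_span h'.
Proof. by move=> [cf H] E; exists cf => x; rewrite -E. Qed.

Lemma in_span0 : in_span (fun _ => 0).
Proof. by exists (fun _ => 0) => x; rewrite big1 // => t _; rewrite mul0r. Qed.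

Lemma in_spanD h h' : in_span h -> in_span h' -> in_span (fun x => h x + h' x).
Proof.
move=> [cf H] [cf' H']; exists (fun t => cf t + cf' t) => x.
by rewrite H H' -big_split; apply: eq_bigr => t _; rewrite mulrDl.
Qed.

Lemma in_spanZ c h : in_span h -> in_span (fun x => c * h x).
Proof.
move=> [cf H]; exists (fun t => c * cf t) => x.
by rewrite H mulr_sumr; apply: eq_bigr => t _; rewrite mulrA.
Qed.

Lemma in_span_sum (I : finType) (F : I -> X -> K) :
  (forall i, in_span (F i)) -> in_span (fun x => \sum_i F i x).
Proof.
move=> HF; elim: (index_enum I) => [|i r IH].
  by apply: in_span_ext in_span0 _ => x; rewrite big_nil.
by apply: in_span_ext (in_spanD (HF i) IH) _ => x; rewrite big_cons.
Qed.

Lemma in_span_lincomb (cf : T -> K) : (forall t, t \notin S -> cf t = 0) ->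
  in_span (fun x => \sum_t cf t * fam t x).
Proof.
move=> H; exists cf => x; rewrite [RHS]big_mkcond; apply: eq_bigr => t _.
by case: ifP => // /negbT /H ->; rewrite mul0r.
Qed.

Lemma in_span_fam t : t \in S -> in_span (fam t).
Proof.
move=> tS; exists (fun t' => (t' == t)%:R) => x.
rewrite (bigD1 t) //= eqxx mul1r big1 ?addr0 // => t' /andP[_ /negbTE ->].
exact: mul0r.
Qed.

End Span.

Lemma has_dim_family (R : realType) (P : tens R -> Prop)
    (T : finType) (S : pred T) (fam : T -> tens R) :
  (forall t, t \in S -> P (fam t)) ->
  (forall cf : T -> R[i], (forall w, \sum_(t in S) cf t * fam t w = 0) ->
     forall t, t \in S -> cf t = 0) ->
  (forall f, P f -> in_span S fam f) ->
  has_dim P #|S|.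
Proof.
move=> HP Hind Hsp; exists (fun j => fam (enum_val j)); split; [|split].
- by move=> j; apply/HP/enum_valP.
- move=> cf H j; have jS := enum_valP j.
  rewrite -[j](enum_valK_in jS); apply: (Hind (fun t => cf (enum_rank_in jS t))) => // w.
  rewrite -[RHS](H w) (big_enum_val (fun t => cf (enum_rank_in jS t) * fam t w)) /=.
  by apply: eq_bigr => i _; rewrite enum_valK_in.
- move=> f /Hsp [cf Hf]; exists (fun j => cf (enum_val j)) => w.
  by rewrite Hf (big_enum_val (fun t => cf t * fam t w)).
Qed.

Section Words.
Variable R : realType.
Implicit Types (f g : tens R) (u w : seq letter).

Definition mono u : tens R := fun w => (w == u)%:R.

Lemma fin_supp_mono u : fin_supp (mono u).
Proof.
exists (size u).+1 => w Hw; rewrite /mono; case: eqP => // Ew.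
by move: Hw; rewrite Ew ltnn.
Qed.

Definition rtens g (x : letter) : tens R := tmul (tmul (mono [::]) g) (mono [:: x]).
Definition ltens (x : letter) g : tens R := tmul (tmul (mono [:: x]) g) (mono [::]).

Definition supp2 g := forall w, size w != 2%N -> g w = 0.

Lemma tmul3 f g h x y z : supp2 g ->
  tmul (tmul f g) h [:: x; y; z] =
    f [::] * g [:: x; y] * h [:: z] + f [:: x] * g [:: y; z] * h [::].
Proof.
move=> Hg; rewrite /tmul /= !big_ord_recl !big_ord0 /=.
rewrite !(Hg [::]) // !(Hg [:: x]) // !(Hg [:: y]) // !(Hg [:: z]) // !(Hg [:: x; y; z]) //.
by rewrite !(mulr0, mul0r, addr0, add0r).
Qed.

Lemma rtensE g a x y z : supp2 g -> rtens g a [:: x; y; z] = g [:: x; y] * (z == a)%:R.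
Proof. by move=> Hg; rewrite /rtens tmul3 // /mono /= eqseq_cons andbT mul1r !mulr0 addr0. Qed.

Lemma ltensE g a x y z : supp2 g -> ltens a g [:: x; y; z] = (x == a)%:R * g [:: y; z].
Proof.
by move=> Hg; rewrite /ltens tmul3 // /mono /= eqseq_cons andbT !(mulr0, mul0r, add0r, mulr1).
Qed.

Lemma homog_tmul k1 l1 k2 l2 f g : homog k1 l1 f -> homog k2 l2 g ->
  homog (k1 + k2)%N (l1 + l2)%N (tmul f g).
Proof.
move=> Hf Hg w; rewrite /tmul => Hne.
have [j|H0] := pickP (fun j : 'I_(size w).+1 => f (take j w) * g (drop j w) != 0); last first.
  by move: Hne; rewrite big1 ?eqxx // => j _; move/negbFE/eqP: (H0 j).
rewrite mulf_eq0 negb_or => /andP[/Hf[e1 e2] /Hg[e3 e4]].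
by rewrite -(cat_take_drop j w) !count_cat e1 e2 e3 e4.
Qed.

Lemma homog_mono u : homog (count isV u) (count isW u) (mono u).
Proof. by move=> w; rewrite /mono; case: (w =P u) => [-> //|_]; rewrite eqxx. Qed.

Lemma homog_rtens k l g x : homog k l g -> homog (k + isV x)%N (l + isW x)%N (rtens g x).
Proof.
move=> Hg; have := homog_tmul (homog_tmul (homog_mono (u := [::])) Hg) (homog_mono (u := [:: x])).
by rewrite /= !add0n !addn0.
Qed.

Lemma homog_ltens k l g x : homog k l g -> homog (isV x + k)%N (isW x + l)%N (ltens x g).
Proof.
move=> Hg; have := homog_tmul (homog_tmul (homog_mono (u := [:: x])) Hg) (homog_mono (u := [::])).
by rewrite /= !addn0.
Qed.

Lemma count_isV_isW w : (count isV w + count isW w)%N = size w.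
Proof. by elim: w => //= -[x|x] w <-; rewrite /= ?add0n ?addn0 ?addSn ?addnS. Qed.

Lemma word3P k l (P : seq letter -> Prop) : (k + l)%N = 3%N ->
  (forall x y z, count isV [:: x; y; z] = k -> count isW [:: x; y; z] = l -> P [:: x; y; z]) ->
  forall w, count isV w = k -> count isW w = l -> P w.
Proof.
move=> Hkl HP w e1 e2; have : size w = 3%N by rewrite -count_isV_isW e1 e2.
by case: w e1 e2 => [|x [|y [|z [|]]]] // e1 e2 _; apply: HP.
Qed.

Lemma word30P (P : seq letter -> Prop) : (forall p r s, P [:: inl p; inl r; inl s]) ->
  forall w, count isV w = 3%N -> count isW w = 0%N -> P w.
Proof. by move=> HP; apply: word3P => // -[x|x] [y|y] [z|z]. Qed.

Lemma word03P (P : seq letter -> Prop) : (forall j l m, P [:: inr j; inr l; inr m]) ->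
  forall w, count isV w = 0%N -> count isW w = 3%N -> P w.
Proof. by move=> HP; apply: word3P => // -[x|x] [y|y] [z|z]. Qed.

Lemma word21P (P : seq letter -> Prop) :
  (forall l m n, P [:: inr l; inl m; inl n]) ->
  (forall p s n, P [:: inl p; inr s; inl n]) ->
  (forall p r s, P [:: inl p; inl r; inr s]) ->
  forall w, count isV w = 2%N -> count isW w = 1%N -> P w.
Proof. by move=> H1 H2 H3; apply: word3P => // -[x|x] [y|y] [z|z]. Qed.

Lemma word12P (P : seq letter -> Prop) :
  (forall j l m, P [:: inr j; inr l; inl m]) ->
  (forall l p s, P [:: inr l; inl p; inr s]) ->
  (forall p s t, P [:: inl p; inr s; inr t]) ->
  forall w, count isV w = 1%N -> count isW w = 2%N -> P w.
Proof. by move=> H1 H2 H3; apply: word3P => // -[x|x] [y|y] [z|z]. Qed.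

Definition hpart k l f : tens R := fun w =>
  if (count isV w == k) && (count isW w == l) then f w else 0.

Lemma hpart_id k l f : homog k l f -> hpart k l f =1 f.
Proof.
move=> Hf w; rewrite /hpart; case: ifP => // /negbT H.
by case: (f w =P 0) => // /eqP /Hf [e1 e2]; rewrite e1 e2 !eqxx in H.
Qed.

Lemma hpart_eq0 k l k' l' f : homog k' l' f -> (k != k') || (l != l') ->
  hpart k l f =1 (fun _ => 0).
Proof.
move=> Hf Hn w; rewrite /hpart; case: ifP => // /andP[/eqP e1 /eqP e2].
by case: (f w =P 0) => // /eqP /Hf [e3 e4]; move: Hn; rewrite -e1 -e2 e3 e4 !eqxx.
Qed.

End Words.

Section GenBasics.
Variables (R : realType) (L : BQD R).
Implicit Types (f g : tens R).

Lemma supp2_gen_a k : supp2 (gen_a L k).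
Proof. by case=> [|[x|x] [|[y|y] [|z u]]]. Qed.
Lemma supp2_gen_b m : supp2 (gen_b L m).
Proof. by case=> [|[x|x] [|[y|y] [|z u]]]. Qed.
Lemma supp2_gen_c : supp2 (gen_c L).
Proof. by case=> [|[x|x] [|[y|y] [|z u]]]. Qed.
Lemma supp2_gen_rel l m : supp2 (gen_rel L l m).
Proof. by case=> [|[x|x] [|[y|y] [|z u]]]. Qed.

Lemma supp2_gen g : is_gen L g -> supp2 g.
Proof.
by case=> [[k ->]|[[m ->]|[->|[l [m ->]]]]];
  [apply: supp2_gen_a | apply: supp2_gen_b | apply: supp2_gen_c | apply: supp2_gen_rel].
Qed.

Lemma homog_gen_a k : homog 2%N 0%N (gen_a L k).
Proof. by case=> [|[x|x] [|[y|y] [|z u]]] //=; rewrite eqxx. Qed.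
Lemma homog_gen_b m : homog 0%N 2%N (gen_b L m).
Proof. by case=> [|[x|x] [|[y|y] [|z u]]] //=; rewrite eqxx. Qed.
Lemma homog_gen_c : homog 1%N 1%N (gen_c L).
Proof. by case=> [|[x|x] [|[y|y] [|z u]]] //=; rewrite eqxx. Qed.
Lemma homog_gen_rel l m : homog 1%N 1%N (gen_rel L l m).
Proof. by case=> [|[x|x] [|[y|y] [|z u]]] //=; rewrite eqxx. Qed.

Lemma is_gen_a k : is_gen L (gen_a L k). Proof. by left; exists k. Qed.
Lemma is_gen_b m : is_gen L (gen_b L m). Proof. by right; left; exists m. Qed.
Lemma is_gen_c : is_gen L (gen_c L). Proof. by right; right; left. Qed.
Lemma is_gen_rel l m : is_gen L (gen_rel L l m). Proof. by right; right; right; exists l, m. Qed.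

End GenBasics.

#[local] Hint Resolve is_gen_a is_gen_b is_gen_c is_gen_rel : core.
#[local] Hint Resolve supp2_gen_a supp2_gen_b supp2_gen_c supp2_gen_rel : core.

Section GenProducts.
Variables (R : realType) (L : BQD R).
Implicit Types (f g : tens R).

Lemma in_I_rtens g x : is_gen L g -> in_I L (rtens g x).
Proof. by move=> Hg; apply: in_Igen => //; apply: fin_supp_mono. Qed.

Lemma in_I_ltens g x : is_gen L g -> in_I L (ltens x g).
Proof. by move=> Hg; apply: in_Igen => //; apply: fin_supp_mono. Qed.

Section SpanCriterion.
Variables (T : finType) (S : pred T) (fam : T -> tens R) (k l : nat).
Hypothesis homog_fam : forall t, t \in S -> homog k l (fam t).

Lemma in_span_hpart h E : in_span S fam E ->
  (forall w, count isV w = k -> count isW w = l -> h w = E w) ->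
  in_span S fam (hpart k l h).
Proof.
move=> [cf HE] Hh; exists cf => w; rewrite /hpart.
case: ifP => [/andP[/eqP e1 /eqP e2]|H]; first by rewrite Hh // HE.
rewrite big1 // => t tS; case: (fam t w =P 0) => [->|/eqP Hn]; first by rewrite mulr0.
by have [e1 e2] := homog_fam tS Hn; rewrite e1 e2 !eqxx in H.
Qed.

Lemma in_span_hpartW h : in_span S fam h -> in_span S fam (hpart k l h).
Proof. by move=> /in_span_hpart; apply. Qed.

Lemma in_span_hpart_off k' l' h : homog k' l' h -> (k != k') || (l != l') ->
  in_span S fam (hpart k l h).
Proof. by move=> Hh Hn; apply: in_span_ext (in_span0 S fam) _ => w; rewrite (hpart_eq0 Hh Hn). Qed.

Lemma in_span_hpart_rtens_off kg lg g x : homog kg lg g ->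
  (k != kg + isV x)%N || (l != lg + isW x)%N -> in_span S fam (hpart k l (rtens g x)).
Proof. by move=> Hg; apply: in_span_hpart_off (homog_rtens (x := x) Hg). Qed.

Lemma in_span_hpart_ltens_off kg lg g x : homog kg lg g ->
  (k != isV x + kg)%N || (l != isW x + lg)%N -> in_span S fam (hpart k l (ltens x g)).
Proof. by move=> Hg; apply: in_span_hpart_off (homog_ltens (x := x) Hg). Qed.

Definition spans_gen_products :=
  forall g x, is_gen L g ->
    in_span S fam (hpart k l (rtens g x)) /\ in_span S fam (hpart k l (ltens x g)).

Lemma in_I_hpart_in_span f : (k + l = 3)%N -> spans_gen_products ->
  in_I L f -> in_span S fam (hpart k l f).
Proof.
move=> Hkl Hgen; elim=> {f}.
- by apply: in_span_ext (in_span0 S fam) _ => w; rewrite /hpart; case: ifP.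
- move=> f g _ Hf _ Hg; apply: in_span_ext (in_spanD Hf Hg) _ => w.
  by rewrite /hpart; case: ifP; rewrite ?addr0.
- move=> f1 g f2 _ _ Hg.
  have Hr a := proj1 (Hgen g a Hg); have Hl a := proj2 (Hgen g a Hg).
  apply: in_span_ext (in_spanD (in_span_sum (fun a => in_spanZ (f1 [::] * f2 [:: a]) (Hr a)))
                         (in_span_sum (fun a => in_spanZ (f1 [:: a] * f2 [::]) (Hl a)))) _ => w.
  rewrite /hpart; case: ifP => [/andP[/eqP e1 /eqP e2]|_]; last first.
    by rewrite !big1 ?addr0 // => *; rewrite mulr0.
  have [a [b [c ->]]] : exists a b c, w = [:: a; b; c].
    by apply: (word3P (P := fun w => exists x y z, w = [:: x; y; z]) Hkl _ e1 e2) => x y z;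
      exists x, y, z.
  have Hsz := supp2_gen Hg.
  rewrite tmul3 // -(sum_delta_r' (fun a' => f1 [::] * g [:: a; b] * f2 [:: a']) c).
  rewrite -(sum_delta_l (fun a' => f1 [:: a'] * g [:: b; c] * f2 [::]) a).
  by congr (_ + _); apply: eq_bigr => a' _; rewrite ?rtensE ?ltensE //; ring.
- by move=> f g _ Hf E; apply: in_span_ext Hf _ => w; rewrite /hpart E.
Qed.

Lemma has_dim_I_comp : (k + l = 3)%N ->
  (forall t, t \in S -> in_I L (fam t)) ->
  (forall cf : T -> R[i], (forall w, \sum_(t in S) cf t * fam t w = 0) ->
     forall t, t \in S -> cf t = 0) ->
  spans_gen_products -> has_dim (I_comp L k l) #|S|.
Proof.
move=> Hkl HI Hind Hgen; apply: has_dim_family Hind _ => [t tS|f [Hf Hh]].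
  by split; [apply: HI | apply: homog_fam].
by apply: in_span_ext (in_I_hpart_in_span Hkl Hgen Hf) _; apply: hpart_id.
Qed.

End SpanCriterion.

End GenProducts.

Definition i0 : 'I_3 := @Ordinal 3 0 isT.
Definition i1 : 'I_3 := @Ordinal 3 1 isT.
Definition i2 : 'I_3 := @Ordinal 3 2 isT.

Lemma sum3 (V : nmodType) (F : 'I_3 -> V) : \sum_(i : 'I_3) F i = F i0 + F i1 + F i2.
Proof. by rewrite !big_ord_recr big_ord0 /= add0r; congr (F _ + F _ + F _); apply: val_inj. Qed.

Lemma mul_fixed_eq0 (K : idomainType) (k x : K) : k != 1 -> x = k * x -> x = 0.
Proof.
move=> Hk Hx; apply/eqP; move: Hk; apply: contraNT => Hx0.
by apply/eqP/(mulIf Hx0); rewrite mul1r -Hx.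
Qed.

Lemma kronC (R : nzRingType) (i j : 'I_3) : kron i j = kron j i :> R.
Proof. by rewrite /kron eq_sym. Qed.

Section Scalars.
Variables (R : realType) (L : BQD R).
Local Notation q := (q L).
Local Notation rho := (((q + q^-1) ^+ 2)^-1).
Local Notation kappa := (q ^- 2 + 1 + q ^+ 2).

Lemma qqV_neq0 : q + q^-1 != 0.
Proof.
apply: contra (q2_neqN1 L) => /eqP H.
have -> : q ^+ 2 = q * (q + q^-1) - 1 by rewrite mulrDr divff ?q_neq0 // expr2 addrK.
by rewrite H mulr0 sub0r.
Qed.

Lemma rho_neq0 : rho != 0.
Proof. by rewrite invr_eq0 expf_neq0 // qqV_neq0. Qed.

Lemma sqr_qqV_rho : (q + q^-1) ^+ 2 * rho = 1.
Proof. by rewrite divff // expf_neq0 // qqV_neq0. Qed.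

(* [rho = 1] and [kappa = 1] would force [q ^+ 2] to be a primitive cube, resp.
   fourth, root of unity; the hypothesis [q_root] excludes both. *)
Lemma rho_neq1 : rho != 1.
Proof.
rewrite invr_eq1; apply/eqP => H.
have Hq := q_neq0 L.
have H1 : (q ^+ 2) ^+ 2 + q ^+ 2 + 1 = 0.
  have E : (q ^+ 2) ^+ 2 + q ^+ 2 + 1 = q ^+ 2 * ((q + q^-1) ^+ 2 - 1) by field.
  by rewrite E H subrr mulr0.
case: (q_root L) => [Hq2|Hn].
  by move: H1; rewrite Hq2 expr1n => /eqP; rewrite -[_ + _ + _](natrD _ 2 1) pnatr_eq0.
move: (Hn 3%N isT); have -> : (q ^+ 2) ^+ 3 = 1 + (q ^+ 2 - 1) * ((q ^+ 2) ^+ 2 + q ^+ 2 + 1).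
  by ring.
by rewrite H1 mulr0 addr0 eqxx.
Qed.

Lemma kappa_neq1 : kappa != 1.
Proof.
apply/eqP => H.
have Hq := q_neq0 L.
have H1 : (q ^+ 2) ^+ 2 + 1 = 0.
  have E : (q ^+ 2) ^+ 2 + 1 = q ^+ 2 * (kappa - 1) by field.
  by rewrite E H subrr mulr0.
case: (q_root L) => [Hq2|Hn].
  by move: H1; rewrite Hq2 expr1n => /eqP; rewrite -(natrD _ 1 1) pnatr_eq0.
move: (Hn 4%N isT); have -> : (q ^+ 2) ^+ 4 = 1 + ((q ^+ 2) ^+ 2 - 1) * ((q ^+ 2) ^+ 2 + 1).
  by ring.
by rewrite H1 mulr0 addr0 eqxx.
Qed.

End Scalars.

Section Identities.
Variables (R : realType) (L : BQD R).
Local Notation A := (tA L). Local Notation a := (ta L).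
Local Notation B := (tB L). Local Notation b := (tb L).
Local Notation C := (tC L). Local Notation c := (tc L).
Local Notation D := (tD L). Local Notation d := (td L).
Local Notation om := (om L).
Local Notation G := (Gco L).
Local Notation rho := (((q L + (q L)^-1) ^+ 2)^-1).

Lemma kron_sym_inverse (X Y : 'I_3 -> 'I_3 -> R[i]) :
  (forall i j, \sum_k X i k * Y k j = kron i j) ->
  forall i j, \sum_k Y i k * X k j = kron i j.
Proof.
move=> H i j; pose M : 'M[R[i]]_3 := \matrix_(i, k) X i k.
pose N : 'M[R[i]]_3 := \matrix_(k, j) Y k j.
have /mulmx1C /matrixP /(_ i j) : M *m N = 1%:M.
  apply/matrixP => i' j'; rewrite !mxE -[_%:R]/(kron i' j') -H.
  by apply: eq_bigr => k _; rewrite !mxE.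
by rewrite !mxE /kron => <-; apply: eq_bigr => k _; rewrite !mxE.
Qed.

Lemma Cc_id k k' : \sum_i C k i * c i k' = kron k k'.
Proof. exact: (kron_sym_inverse (X := c) (Y := C) (ax1 L)). Qed.

Lemma dD_id l t : \sum_j d l j * D j t = kron l t.
Proof. exact: (kron_sym_inverse (X := D) (Y := d) (ax2 L)). Qed.

Lemma dA_b l n s : \sum_r d l r * A r n s = om * b n l s.
Proof. by rewrite -(ax7 L) mulrA -exprS (om3 L) mul1r. Qed.

Lemma da_ca j i m : \sum_k d k j * a k i m = om ^+ 2 * \sum_k c i k * a k m j.
Proof. by rewrite (ax5 L) mulrA -exprSr (om3 L) mul1r. Qed.

Lemma Bb_id m j : \sum_k \sum_l b m k l * B k l j = kron m j.
Proof.
transitivity (\sum_k \sum_l (\sum_i c i l * A m i k) * (om * \sum_i' a l i' j * C k i')).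
  by apply: eq_bigr => k _; apply: eq_bigr => l _; rewrite (ax9 L) (ax8 L).
transitivity (om * \sum_i \sum_i' (\sum_k A m i k * C k i') * (\sum_l c i l * a l i' j)).
  by rewrite !sum3; ring.
transitivity (om * \sum_i \sum_i' (om * \sum_k A i i' k * D m k) * (om * \sum_l d l j * a l i i')).
  by congr (_ * _); apply: eq_bigr => i _; apply: eq_bigr => i' _; rewrite (ax4 L) (ax5 L).
transitivity (om ^+ 3 * \sum_k \sum_l D m k * d l j * (\sum_i \sum_i' a l i i' * A i i' k)).
  by rewrite !sum3; ring.
transitivity (\sum_k \sum_l D m k * d l j * kron l k).
  by rewrite (om3 L) mul1r; apply: eq_bigr => k _; apply: eq_bigr => l _; rewrite (ax3 L).
by rewrite -(ax2 L); apply: eq_bigr => k _; rewrite sum_delta_r.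
Qed.

Lemma cB_a p t m : \sum_s c p s * B s t m = om * a t p m.
Proof.
transitivity (\sum_j (\sum_s c p s * a s m j) * D j t).
  by under eq_bigr => s _ do rewrite -(ax6 L); rewrite !sum3; ring.
transitivity (om * \sum_l a l p m * (\sum_j d l j * D j t)).
  by under eq_bigr => j _ do rewrite (ax5 L); rewrite !sum3; ring.
by under eq_bigr => l _ do rewrite dD_id; rewrite sum_delta_r.
Qed.

Lemma Db_A p m t : \sum_s D p s * b m s t = om ^+ 2 * A p m t.
Proof.
transitivity (om ^+ 2 * \sum_j (\sum_s D p s * d s j) * A j m t).
  by under eq_bigr => s _ do rewrite -(ax7 L); rewrite !sum3; ring.
by under eq_bigr => j _ do rewrite (ax2 L); rewrite sum_delta_l.
Qed.

Lemma cG_ba p n p' s' : \sum_s c p s * G s n p' s' = om ^+ 2 * \sum_k b n k s' * a k p p'.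
Proof.
transitivity (\sum_r (\sum_s c p s * a s p' r) * A r n s').
  by rewrite /Gco !sum3; ring.
transitivity (om * \sum_l a l p p' * (\sum_r d l r * A r n s')).
  by under eq_bigr => r _ do rewrite (ax5 L); rewrite !sum3; ring.
by under eq_bigr => l _ do rewrite dA_b; rewrite !sum3; ring.
Qed.

Lemma cG_ab j p s t : \sum_p' c p' t * G j p' p s = \sum_i a j p i * b i s t.
Proof.
transitivity (\sum_r a j p r * (\sum_p' c p' t * A r p' s)).
  by rewrite /Gco !sum3; ring.
by apply: eq_bigr => r _; rewrite (ax9 L).
Qed.

Lemma aGG_rho k j p p' s' :
  \sum_i \sum_i' \sum_s a k i i' * G j i p s * G s i' p' s'
  = rho * (a j p p' * kron k s' + B j k p * c p' s').
Proof.
transitivity (\sum_r a j p r *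
    (\sum_i \sum_i' \sum_s \sum_r' a k i i' * A r i s * a s p' r' * A r' i' s')).
  by rewrite /Gco !sum3; ring.
transitivity (\sum_r a j p r * (rho * (kron r p' * kron k s' + D r k * c p' s'))).
  by apply: eq_bigr => r _; rewrite (ax12 L).
transitivity (rho * ((\sum_r a j p r * kron r p') * kron k s'
                     + (\sum_r a j p r * D r k) * c p' s')).
  by rewrite !sum3; ring.
by rewrite sum_delta_r (ax6 L).
Qed.

Lemma bGG_rho m n p s t :
  \sum_k \sum_l \sum_p' b m k l * G k p' p s * G l n p' t
  = rho * (om ^+ 2 * kron p m * b n s t + om * A m n t * c p s).
Proof.
transitivity (\sum_k \sum_p' \sum_i A m i k * G k p' p s * (\sum_l c i l * G l n p' t)).
  under eq_bigr => k _ do under eq_bigr => l _ do under eq_bigr => p' _ do rewrite -(ax9 L).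
  by rewrite !sum3; ring.
transitivity (om ^+ 2 * \sum_k' b n k' t *
    (\sum_i \sum_p' \sum_k \sum_r a k' i p' * A m i k * a k p r * A r p' s)).
  under eq_bigr => k _ do under eq_bigr => p' _ do under eq_bigr => i _ do rewrite cG_ba.
  by rewrite /Gco !sum3; ring.
transitivity (om ^+ 2 * \sum_k' b n k' t * (rho * (kron m p * kron k' s + D m k' * c p s))).
  by congr (_ * _); apply: eq_bigr => k' _; rewrite (ax12 L).
transitivity (om ^+ 2 * rho *
    (kron m p * (\sum_k' b n k' t * kron k' s) + c p s * (\sum_k' D m k' * b n k' t))).
  by rewrite !sum3; ring.
rewrite sum_delta_r Db_A kronC.
by transitivity (rho * (om ^+ 2 * kron p m * b n s t + om ^+ 3 * om * A m n t * c p s));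
  [ring | rewrite (om3 L) mul1r].
Qed.

Lemma bB_G m' u s m : \sum_t b m' t u * B s t m = om ^+ 2 * G s m' m u.
Proof.
transitivity (om ^+ 3 * \sum_i \sum_j C s i * A j m' u * (\sum_t d t j * a t i m)).
  under eq_bigr => t _ do rewrite -(ax7 L) -(ax8 L).
  by rewrite !sum3; ring.
transitivity (om ^+ 2 * \sum_k (\sum_i C s i * c i k) * (\sum_j a k m j * A j m' u)).
  under eq_bigr => i _ do under eq_bigr => j _ do rewrite da_ca.
  by rewrite (om3 L) !sum3; ring.
by under eq_bigr => k _ do rewrite Cc_id; rewrite sum_delta_l.
Qed.

Lemma bB_aA m s u m' : \sum_t b m s t * B t u m' = om * \sum_r a u r m' * A m r s.
Proof.
transitivity (om * \sum_i \sum_i' A m i s * a u i' m' * (\sum_t c i t * C t i')).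
  under eq_bigr => t _ do rewrite -(ax9 L) -(ax8 L).
  by rewrite !sum3; ring.
transitivity (om * \sum_i A m i s * (\sum_i' kron i i' * a u i' m')).
  by under eq_bigr => i _ do under eq_bigr => i' _ do rewrite (ax1 L); rewrite !sum3; ring.
by congr (_ * _); apply: eq_bigr => i _; rewrite sum_delta_l mulrC.
Qed.

Lemma cb_db u s t : om * \sum_m c m u * b m s t = \sum_m d s m * b m t u.
Proof.
transitivity (om ^+ 3 * \sum_m \sum_j c m u * d s j * A j m t).
  by under eq_bigr => m _ do rewrite -(ax7 L); rewrite !sum3; ring.
rewrite (om3 L) mul1r.
transitivity (\sum_m d s m * \sum_i c i u * A m i t).
  by rewrite !sum3; ring.
by apply: eq_bigr => m _; rewrite (ax9 L).
Qed.

End Identities.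

Section Relations.
Variables (R : realType) (L : BQD R).
Local Notation A := (tA L). Local Notation a := (ta L).
Local Notation B := (tB L). Local Notation b := (tb L).
Local Notation C := (tC L). Local Notation c := (tc L).
Local Notation D := (tD L). Local Notation d := (td L).
Local Notation om := (om L).
Local Notation G := (Gco L).
Local Notation rho := (((q L + (q L)^-1) ^+ 2)^-1).

Section RelationsV3.
Variables (X Y : 'I_3 -> 'I_3 -> R[i]).
Hypothesis rel : forall p r s, \sum_k Y k s * a k p r + \sum_k X p k * a k r s = 0.

Lemma relV3_left p l : X p l = - \sum_k \sum_s Y k s * G k s p l.
Proof.
have -> : X p l = \sum_k X p k * (\sum_r \sum_s a k r s * A r s l).
  by rewrite -(sum_delta_r (X p) l); apply: eq_bigr => k _; rewrite (ax3 L).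
apply/eqP; rewrite -addr_eq0; apply/eqP.
transitivity (\sum_r \sum_s (\sum_k Y k s * a k p r + \sum_k X p k * a k r s) * A r s l).
  by rewrite /Gco !sum3; ring.
by apply: big1 => r _; apply: big1 => s _; rewrite rel mul0r.
Qed.

Lemma relV3_right l s :
  Y l s = - \sum_p \sum_k X p k * (\sum_r a k r s * A p r l).
Proof.
have -> : Y l s = \sum_k Y k s * (\sum_p \sum_r a k p r * A p r l).
  by rewrite -(sum_delta_r (Y^~ s) l); apply: eq_bigr => k _; rewrite (ax3 L).
apply/eqP; rewrite -addr_eq0; apply/eqP.
transitivity (\sum_p \sum_r (\sum_k Y k s * a k p r + \sum_k X p k * a k r s) * A p r l).
  by rewrite !sum3; ring.
by apply: big1 => p _; apply: big1 => r _; rewrite rel mul0r.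
Qed.

(* Substitute each half of the relation into the other: [ax12] turns the
   resulting double contraction into [rho (1 + c D)]. *)
Lemma relV3_fixpoint p' s' :
  X p' s' = rho * X p' s' + rho * (\sum_p \sum_k X p k * D p k) * c p' s'.
Proof.
rewrite {1}relV3_left.
transitivity (\sum_p \sum_k' X p k' * (\sum_k \sum_s
    (\sum_r a k' r s * A p r k) * G k s p' s')).
  under eq_bigr => k _ do under eq_bigr => s _ do rewrite relV3_right.
  by rewrite !sum3; ring.
transitivity (\sum_p \sum_k' X p k' * (rho * (kron p p' * kron k' s' + D p k' * c p' s'))).
  by apply: eq_bigr => p _; apply: eq_bigr => k' _; rewrite -(ax12 L) /Gco !sum3; ring.
transitivity (rho * (\sum_p kron p p' * (\sum_k' kron k' s' * X p k')) +
              rho * (\sum_p \sum_k X p k * D p k) * c p' s').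
  by rewrite !sum3; ring.
by rewrite sum_delta_l' sum_delta_l'.
Qed.

Lemma relV3_trivial k0 : c i0 k0 != 0 -> X i0 k0 = 0 ->
  (forall p k, X p k = 0) /\ (forall k s, Y k s = 0).
Proof.
move=> Hc HX.
have HS : \sum_p \sum_k X p k * D p k = 0.
  have /esym/eqP := relV3_fixpoint i0 k0.
  by rewrite HX mulr0 add0r !mulf_eq0 (negbTE (rho_neq0 L)) (negbTE Hc) orbF => /eqP.
have HX0 p k : X p k = 0.
  by apply: mul_fixed_eq0 (rho_neq1 L) _; rewrite {1}relV3_fixpoint HS mulr0 mul0r addr0.
split=> // k s; rewrite relV3_right big1 ?oppr0 // => p _.
by apply: big1 => k' _; rewrite HX0 mul0r.
Qed.

End RelationsV3.

Section RelationsW3.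
Variables (X Y : 'I_3 -> 'I_3 -> R[i]).
Hypothesis rel : forall s t u, \sum_m X s m * b m t u + \sum_m Y m u * b m s t = 0.

Lemma relW3_left s m' : X s m' = - \sum_m \sum_u Y m u * (\sum_t b m s t * B t u m').
Proof.
have -> : X s m' = \sum_m X s m * (\sum_t \sum_u b m t u * B t u m').
  by rewrite -(sum_delta_r (X s) m'); apply: eq_bigr => m _; rewrite Bb_id.
apply/eqP; rewrite -addr_eq0; apply/eqP.
transitivity (\sum_t \sum_u (\sum_m X s m * b m t u + \sum_m Y m u * b m s t) * B t u m').
  by rewrite !sum3; ring.
by apply: big1 => t _; apply: big1 => u _; rewrite rel mul0r.
Qed.

Lemma relW3_right m' u : Y m' u = - \sum_s \sum_m X s m * (\sum_t b m t u * B s t m').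
Proof.
have -> : Y m' u = \sum_m Y m u * (\sum_s \sum_t b m s t * B s t m').
  by rewrite -(sum_delta_r (Y^~ u) m'); apply: eq_bigr => m _; rewrite Bb_id.
apply/eqP; rewrite -addr_eq0; apply/eqP.
transitivity (\sum_s \sum_t (\sum_m X s m * b m t u + \sum_m Y m u * b m s t) * B s t m').
  by rewrite !sum3; ring.
by apply: big1 => s _; apply: big1 => t _; rewrite rel mul0r.
Qed.

Lemma bB_bB_rho s m2 s' m' :
  \sum_u \sum_m (\sum_t b m2 t u * B s t m) * (\sum_t b m s' t * B t u m')
  = rho * (kron s s' * kron m2 m' + C s m2 * d s' m').
Proof.
transitivity (\sum_u \sum_m (om ^+ 2 * G s m2 m u) * (om * \sum_r a u r m' * A m r s')).
  by apply: eq_bigr => u _; apply: eq_bigr => m _; rewrite bB_G bB_aA.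
rewrite -(ax13 L) -[RHS]mul1r -(om3 L).
by rewrite /Gco !sum3; ring.
Qed.

(* As for [relV3_fixpoint], with [ax13] in place of [ax12]. *)
Lemma relW3_fixpoint s' m' :
  X s' m' = rho * X s' m' + rho * (\sum_s \sum_m X s m * C s m) * d s' m'.
Proof.
rewrite {1}relW3_left.
transitivity (\sum_s \sum_m2 X s m2 * (\sum_u \sum_m
    (\sum_t b m2 t u * B s t m) * (\sum_t b m s' t * B t u m'))).
  under eq_bigr => m _ do under eq_bigr => u _ do rewrite relW3_right.
  by rewrite !sum3; ring.
under eq_bigr => s _ do under eq_bigr => m2 _ do rewrite bB_bB_rho.
transitivity (rho * (\sum_s kron s s' * (\sum_m2 kron m2 m' * X s m2)) +
              rho * (\sum_s \sum_m X s m * C s m) * d s' m').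
  by rewrite !sum3; ring.
by rewrite sum_delta_l' sum_delta_l'.
Qed.

Lemma relW3_trivial j0 m0 : d j0 m0 != 0 -> X j0 m0 = 0 ->
  (forall s m, X s m = 0) /\ (forall m u, Y m u = 0).
Proof.
move=> Hd HX.
have HS : \sum_s \sum_m X s m * C s m = 0.
  have /esym/eqP := relW3_fixpoint j0 m0.
  by rewrite HX mulr0 add0r !mulf_eq0 (negbTE (rho_neq0 L)) (negbTE Hd) orbF => /eqP.
have HX0 s m : X s m = 0.
  by apply: mul_fixed_eq0 (rho_neq1 L) _; rewrite {1}relW3_fixpoint HS mulr0 mul0r addr0.
split=> // m u; rewrite relW3_right big1 ?oppr0 // => s _.
by apply: big1 => m' _; rewrite HX0 mul0r.
Qed.

End RelationsW3.

Lemma aW_Vc_independent (Z : 'I_3 -> 'I_3 -> R[i]) (x : 'I_3 -> R[i]) :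
  (forall p i s, \sum_k Z k s * a k p i + x p * c i s = 0) ->
  (forall p, x p = 0) /\ (forall k s, Z k s = 0).
Proof.
move=> rel.
have HZ k' s : Z k' s = - \sum_p x p * b p k' s.
  have -> : Z k' s = \sum_k Z k s * (\sum_p \sum_i a k p i * A p i k').
    by rewrite -(sum_delta_r (Z^~ s) k'); apply: eq_bigr => k _; rewrite (ax3 L).
  apply/eqP; rewrite -addr_eq0; apply/eqP.
  under [X in _ + X]eq_bigr => p _ do rewrite -(ax9 L).
  transitivity (\sum_p \sum_i (\sum_k Z k s * a k p i + x p * c i s) * A p i k').
    by rewrite !sum3; ring.
  by apply: big1 => p _; apply: big1 => i _; rewrite rel mul0r.
have Hx p : x p = 0.
  apply: mul_fixed_eq0 (kappa_neq1 L) _.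
  have E1 : \sum_i \sum_s (\sum_k Z k s * a k p i + x p * c i s) * D i s
          = \sum_k \sum_s Z k s * B k s p + (\sum_i \sum_s D i s * c i s) * x p.
    under [X in _ = X + _]eq_bigr => k _ do under eq_bigr => s _ do rewrite -(ax6 L).
    by rewrite !sum3; ring.
  have E2 : \sum_k \sum_s Z k s * B k s p = - x p.
    transitivity (- \sum_p' x p' * (\sum_k \sum_s b p' k s * B k s p)).
      by under eq_bigr => k _ do under eq_bigr => s _ do rewrite HZ; rewrite !sum3; ring.
    by under eq_bigr => p' _ do rewrite Bb_id; rewrite sum_delta_r.
  have : \sum_i \sum_s (\sum_k Z k s * a k p i + x p * c i s) * D i s = 0.
    by apply: big1 => i _; apply: big1 => s _; rewrite rel mul0r.
  by rewrite E1 E2 (ax10 L) addrC => /eqP; rewrite subr_eq0 => /eqP.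
split=> // k s; rewrite HZ big1 ?oppr0 // => p _; by rewrite Hx mul0r.
Qed.

Lemma cW_Vb_independent (y : 'I_3 -> R[i]) (Z : 'I_3 -> 'I_3 -> R[i]) :
  (forall p s t, y t * c p s + \sum_m Z p m * b m s t = 0) ->
  (forall t, y t = 0) /\ (forall p m, Z p m = 0).
Proof.
move=> rel.
have HZ p m' : Z p m' = - (om * \sum_t y t * a t p m').
  have -> : Z p m' = \sum_m Z p m * (\sum_s \sum_t b m s t * B s t m').
    by rewrite -(sum_delta_r (Z p) m'); apply: eq_bigr => m _; rewrite Bb_id.
  apply/eqP; rewrite -addr_eq0; apply/eqP.
  transitivity (\sum_m Z p m * (\sum_s \sum_t b m s t * B s t m') +
                \sum_t y t * (\sum_s c p s * B s t m')).
    by congr (_ + _); rewrite mulr_sumr; apply: eq_bigr => t _; rewrite cB_a; ring.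
  transitivity (\sum_s \sum_t (y t * c p s + \sum_m Z p m * b m s t) * B s t m').
    by rewrite !sum3; ring.
  by apply: big1 => s _; apply: big1 => t _; rewrite rel mul0r.
have Hy t : y t = 0.
  apply: mul_fixed_eq0 (kappa_neq1 L) _.
  have E1 : \sum_p \sum_s (y t * c p s + \sum_m Z p m * b m s t) * D p s
          = (\sum_p \sum_s D p s * c p s) * y t + \sum_p \sum_m Z p m * (om ^+ 2 * A p m t).
    under [X in _ = _ + X]eq_bigr => p _ do under eq_bigr => m _ do rewrite -Db_A.
    by rewrite !sum3; ring.
  have E2 : \sum_p \sum_m Z p m * (om ^+ 2 * A p m t) = - y t.
    transitivity (- (om ^+ 3 * \sum_t' y t' * (\sum_p \sum_m a t' p m * A p m t))).
      by under eq_bigr => p _ do under eq_bigr => m _ do rewrite HZ; rewrite !sum3; ring.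
    by under eq_bigr => t' _ do rewrite (ax3 L); rewrite (om3 L) mul1r sum_delta_r.
  have : \sum_p \sum_s (y t * c p s + \sum_m Z p m * b m s t) * D p s = 0.
    by apply: big1 => p _; apply: big1 => s _; rewrite rel mul0r.
  by rewrite E1 E2 (ax10 L) => /eqP; rewrite subr_eq0 => /eqP.
split=> // p m; rewrite HZ big1 ?mulr0 ?oppr0 // => t _; by rewrite Hy mul0r.
Qed.

End Relations.

Definition pair2 := (('I_3 * 'I_3) + ('I_3 * 'I_3))%type.

Lemma sum_pair2 (V : nmodType) (F : pair2 -> V) :
  \sum_t F t = \sum_i \sum_j F (inl (i, j)) + \sum_i \sum_j F (inr (i, j)).
Proof. by rewrite big_sumType !pair_bigA; congr (_ + _); apply: eq_bigr => -[]. Qed.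

Lemma card_pair2_C1 (t0 : pair2) : #|predC1 t0| = 17%N.
Proof. by rewrite cardC1 card_sum !card_prod !card_ord. Qed.

Ltac hpart_off :=
  solve [ first [ apply: in_span_hpart_rtens_off | apply: in_span_hpart_ltens_off ];
          [ first [ apply: homog_gen_a | apply: homog_gen_b | apply: homog_gen_c
                  | apply: homog_gen_rel ]
          | by [] ] ].

Section Cubic.
Variables (R : realType) (L : BQD R).
Local Notation a := (ta L). Local Notation b := (tb L).
Local Notation c := (tc L). Local Notation d := (td L).
Local Notation om := (om L).

Definition fam30 (t : pair2) : tens R :=
  match t with
  | inl (k, i) => rtens (gen_a L k) (inl i)
  | inr (i, k) => ltens (inl i) (gen_a L k)
  end.

Lemma sum_fam30 cf p r s : \sum_t cf t * fam30 t [:: inl p; inl r; inl s]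
  = \sum_k cf (inl (k, s)) * a k p r + \sum_k cf (inr (p, k)) * a k r s.
Proof.
rewrite sum_pair2; congr (_ + _).
  apply: eq_bigr => k _; rewrite -(sum_delta_r' (fun i => cf (inl (k, i)) * a k p r) s).
  by apply: eq_bigr => i _; rewrite /= rtensE // mulrA.
rewrite -(sum_delta_l (fun i => \sum_k cf (inr (i, k)) * a k r s) p).
apply: eq_bigr => i _; rewrite mulr_sumr; apply: eq_bigr => k _.
by rewrite /= ltensE // mulrCA.
Qed.

Lemma homog_fam30 t : homog 3%N 0%N (fam30 t).
Proof.
by case: t => [[k i]|[i k]]; [exact: (homog_rtens (x := inl i) (@homog_gen_a _ L k)) |
                             exact: (homog_ltens (x := inl i) (@homog_gen_a _ L k))].
Qed.

Section Dim30.
Variable k0 : 'I_3.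
Hypothesis c_neq0 : c i0 k0 != 0.
Let S30 : pred pair2 := predC1 (inr (i0, k0)).
Let homog30 t (_ : t \in S30) : homog 3%N 0%N (fam30 t) := homog_fam30 (t := t).

Lemma fam30_free cf : (forall w, \sum_(t in S30) cf t * fam30 t w = 0) ->
  forall t, t \in S30 -> cf t = 0.
Proof.
move=> H t tS; pose cf' t := if t \in S30 then cf t else 0.
have rel p r s : \sum_k cf' (inl (k, s)) * a k p r + \sum_k cf' (inr (p, k)) * a k r s = 0.
  rewrite -sum_fam30 -[RHS](H [:: inl p; inl r; inl s]) [RHS]big_mkcond.
  by apply: eq_bigr => t' _; rewrite /cf'; case: ifP; rewrite ?mul0r.
have [|HX HY] := relV3_trivial rel c_neq0; first by rewrite /cf' inE eqxx.
have <- : cf' t = cf t by rewrite /cf' tS.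
by case: t {tS} => [[k i]|[i k]]; [apply: HY | apply: HX].
Qed.

(* The identity [(1 (x) a) c = om (a (x) 1) d] expresses [v_i0 (x) a(w_k0)]
   through the rest of the family. *)
Lemma fam30_omitted : in_span S30 fam30 (hpart 3%N 0%N (ltens (inl i0) (gen_a L k0))).
Proof.
pose cf t := match t with
  | inl (k, i) => om * d k i
  | inr (i, k) => (i == i0)%:R * (k == k0)%:R * c i0 k0 - c i k end.
apply: (in_span_hpart homog30 (E := fun w => (c i0 k0)^-1 * \sum_t cf t * fam30 t w)).
  apply/in_spanZ/in_span_lincomb => -[[k i]|[i k]] //; rewrite inE negbK => /eqP[-> ->].
  by rewrite /cf !eqxx !mul1r subrr.
apply: word30P => p r s; rewrite sum_fam30 ltensE // /=.
have -> : \sum_k cf (inr (p, k)) * a k r s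
          = (p == i0)%:R * c i0 k0 * a k0 r s - \sum_k c p k * a k r s.
  rewrite -(sum_delta_l' (fun k => (p == i0)%:R * c i0 k0 * a k r s) k0) -sumrB.
  by apply: eq_bigr => k _; rewrite /cf; ring.
have -> : \sum_k cf (inl (k, s)) * a k p r = \sum_k c p k * a k r s.
  by rewrite (ax5 L) mulr_sumr; apply: eq_bigr => k _; rewrite mulrA.
by field.
Qed.

Lemma fam30_spans : spans_gen_products L S30 fam30 3%N 0%N.
Proof.
move=> g x; case=> [[k ->]|[[m ->]|[->|[l [m ->]]]]]; case: x => [i|j]; split; try hpart_off.
  by apply/(in_span_hpartW homog30)/(in_span_fam fam30 (t := inl (k, i))).
have [[-> ->]|ne] := eqVneq (i, k) (i0, k0); first exact: fam30_omitted.
by apply/(in_span_hpartW homog30)/(in_span_fam fam30 (t := inr (i, k))); rewrite inE.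
Qed.

Lemma dim30_of_k0 : has_dim (I_comp L 3%N 0%N) 17%N.
Proof.
rewrite -(card_pair2_C1 (inr (i0, k0))).
apply: (has_dim_I_comp (S := S30) (fam := fam30)) => //.
- by case=> [[k i]|[i k]] _; [apply: in_I_rtens | apply: in_I_ltens].
- exact: fam30_free.
- exact: fam30_spans.
Qed.

End Dim30.

Lemma dim30 : has_dim (I_comp L 3%N 0%N) 17%N.
Proof.
have [k0 /dim30_of_k0 //|H] := pickP (fun k => c i0 k != 0).
have := ax1 L i0 i0; rewrite big1 => [/eqP|k _]; first by rewrite /kron eqxx eq_sym oner_eq0.
by move/negbFE/eqP: (H k) => ->; rewrite mul0r.
Qed.

Definition fam03 (t : pair2) : tens R :=
  match t with
  | inl (m, j) => rtens (gen_b L m) (inr j)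
  | inr (j, m) => ltens (inr j) (gen_b L m)
  end.

Lemma sum_fam03 cf s t u : \sum_x cf x * fam03 x [:: inr s; inr t; inr u]
  = \sum_m cf (inl (m, u)) * b m s t + \sum_m cf (inr (s, m)) * b m t u.
Proof.
rewrite sum_pair2; congr (_ + _).
  apply: eq_bigr => m _; rewrite -(sum_delta_r' (fun j => cf (inl (m, j)) * b m s t) u).
  by apply: eq_bigr => j _; rewrite /= rtensE // mulrA.
rewrite -(sum_delta_l (fun j => \sum_m cf (inr (j, m)) * b m t u) s).
apply: eq_bigr => j _; rewrite mulr_sumr; apply: eq_bigr => m _.
by rewrite /= ltensE // mulrCA.
Qed.

Lemma homog_fam03 t : homog 0%N 3%N (fam03 t).
Proof.
by case: t => [[m j]|[j m]]; [exact: (homog_rtens (x := inr j) (@homog_gen_b _ L m)) |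
                             exact: (homog_ltens (x := inr j) (@homog_gen_b _ L m))].
Qed.

Section Dim03.
Variables j0 m0 : 'I_3.
Hypothesis d_neq0 : d j0 m0 != 0.
Let S03 : pred pair2 := predC1 (inr (j0, m0)).
Let homog03 t (_ : t \in S03) : homog 0%N 3%N (fam03 t) := homog_fam03 (t := t).

Lemma fam03_free cf : (forall w, \sum_(t in S03) cf t * fam03 t w = 0) ->
  forall t, t \in S03 -> cf t = 0.
Proof.
move=> H t tS; pose cf' t := if t \in S03 then cf t else 0.
have rel s t' u : \sum_m cf' (inr (s, m)) * b m t' u + \sum_m cf' (inl (m, u)) * b m s t' = 0.
  rewrite addrC -sum_fam03 -[RHS](H [:: inr s; inr t'; inr u]) [RHS]big_mkcond.
  by apply: eq_bigr => x _; rewrite /cf'; case: ifP; rewrite ?mul0r.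
have [|HX HY] := relW3_trivial rel d_neq0; first by rewrite /cf' inE eqxx.
have <- : cf' t = cf t by rewrite /cf' tS.
by case: t {tS} => [[m j]|[j m]]; [apply: HY | apply: HX].
Qed.

(* Dually, [om (c (x) 1) b = (1 (x) b) d] (lemma [cb_db]) expresses
   [w_j0 (x) b(v_m0)] through the rest of the family. *)
Lemma fam03_omitted : in_span S03 fam03 (hpart 0%N 3%N (ltens (inr j0) (gen_b L m0))).
Proof.
pose cf t := match t with
  | inl (m, j) => om * c m j
  | inr (j, m) => (j == j0)%:R * (m == m0)%:R * d j0 m0 - d j m end.
apply: (in_span_hpart homog03 (E := fun w => (d j0 m0)^-1 * \sum_t cf t * fam03 t w)).
  apply/in_spanZ/in_span_lincomb => -[[m j]|[j m]] //; rewrite inE negbK => /eqP[-> ->].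
  by rewrite /cf !eqxx !mul1r subrr.
apply: word03P => s t u; rewrite sum_fam03 ltensE // /=.
have -> : \sum_m cf (inr (s, m)) * b m t u
          = (s == j0)%:R * d j0 m0 * b m0 t u - \sum_m d s m * b m t u.
  rewrite -(sum_delta_l' (fun m => (s == j0)%:R * d j0 m0 * b m t u) m0) -sumrB.
  by apply: eq_bigr => m _; rewrite /cf; ring.
have -> : \sum_m cf (inl (m, u)) * b m s t = \sum_m d s m * b m t u.
  by rewrite -cb_db mulr_sumr; apply: eq_bigr => m _; rewrite mulrA.
by field.
Qed.

Lemma fam03_spans : spans_gen_products L S03 fam03 0%N 3%N.
Proof.
move=> g x; case=> [[k ->]|[[m ->]|[->|[l [m ->]]]]]; case: x => [i|j]; split; try hpart_off.
  by apply/(in_span_hpartW homog03)/(in_span_fam fam03 (t := inl (m, j))).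
have [[-> ->]|ne] := eqVneq (j, m) (j0, m0); first exact: fam03_omitted.
by apply/(in_span_hpartW homog03)/(in_span_fam fam03 (t := inr (j, m))); rewrite inE.
Qed.

Lemma dim03_of_j0 : has_dim (I_comp L 0%N 3%N) 17%N.
Proof.
rewrite -(card_pair2_C1 (inr (j0, m0))).
apply: (has_dim_I_comp (S := S03) (fam := fam03)) => //.
- by case=> [[m j]|[j m]] _; [apply: in_I_rtens | apply: in_I_ltens].
- exact: fam03_free.
- exact: fam03_spans.
Qed.

End Dim03.

Lemma dim03 : has_dim (I_comp L 0%N 3%N) 17%N.
Proof.
have [j0 /dim03_of_j0 //|H] := pickP (fun j => d j i0 != 0).
have := ax2 L i0 i0; rewrite big1 => [/eqP|k _]; first by rewrite /kron eqxx eq_sym oner_eq0.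
by move/negbFE/eqP: (H k) => ->; rewrite mulr0.
Qed.

End Cubic.

Definition mixidx :=
  (((('I_3 * 'I_3 * 'I_3) + ('I_3 * 'I_3 * 'I_3)) + ('I_3 * 'I_3)) + 'I_3)%type.

Lemma sum_mixidx (V : nmodType) (F : mixidx -> V) :
  \sum_t F t = \sum_i \sum_j \sum_k F (inl (inl (inl (i, j, k))))
             + \sum_i \sum_j \sum_k F (inl (inl (inr (i, j, k))))
             + \sum_i \sum_j F (inl (inr (i, j))) + \sum_i F (inr i).
Proof.
rewrite !big_sumType !pair_bigA /=.
by congr (_ + _ + _ + _); apply: eq_bigr => -[] // -[].
Qed.

Lemma card_mixidx : #|(predT : pred mixidx)| = 66%N.
Proof. by rewrite cardE -cardT !card_sum !card_prod !card_ord. Qed.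

Section Mixed.
Variables (R : realType) (L : BQD R).
Local Notation A := (tA L). Local Notation a := (ta L).
Local Notation B := (tB L). Local Notation b := (tb L).
Local Notation c := (tc L).
Local Notation om := (om L).
Local Notation G := (Gco L).
Local Notation qq := (q L + (q L)^-1).
Local Notation rho := (((q L + (q L)^-1) ^+ 2)^-1).

Definition fam21 (t : mixidx) : tens R :=
  match t with
  | inl (inl (inl (l, m, n))) => rtens (gen_rel L l m) (inl n)
  | inl (inl (inr (i, l, m))) => ltens (inl i) (gen_rel L l m)
  | inl (inr (k, j)) => rtens (gen_a L k) (inr j)
  | inr i => ltens (inl i) (gen_c L)
  end.

Lemma sum_fam21_wvv cf l m n :
  \sum_t cf t * fam21 t [:: inr l; inl m; inl n] = cf (inl (inl (inl (l, m, n)))).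
Proof.
rewrite sum_mixidx -[RHS]addr0 -[RHS]addr0 -[RHS]addr0; congr (_ + _ + _ + _).
- rewrite -(sum_delta3 (fun l' m' n' => cf (inl (inl (inl (l', m', n'))))) l m n).
  by do 3!(apply: eq_bigr => ? _); rewrite /= rtensE.
- by do 3!(apply: big1 => ? _); rewrite /= ltensE // mul0r mulr0.
- by do 2!(apply: big1 => ? _); rewrite /= rtensE // mul0r mulr0.
- by apply: big1 => ? _; rewrite /= ltensE // mul0r mulr0.
Qed.

Lemma sum_fam21_vwv cf p s n :
  \sum_t cf t * fam21 t [:: inl p; inr s; inl n]
  = qq * \sum_l \sum_m cf (inl (inl (inl (l, m, n)))) * G l m p s
    + cf (inl (inl (inr (p, s, n)))).
Proof.
rewrite sum_mixidx -[RHS]addr0 -[RHS]addr0; congr (_ + _ + _ + _).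
- rewrite mulr_sumr; apply: eq_bigr => l _; rewrite mulr_sumr; apply: eq_bigr => m _.
  rewrite -(sum_delta_r' (fun n' => qq * (cf (inl (inl (inl (l, m, n')))) * G l m p s)) n).
  by apply: eq_bigr => n' _; rewrite /= rtensE //=; ring.
- rewrite -(sum_delta3 (fun i l m => cf (inl (inl (inr (i, l, m))))) p s n).
  by do 3!(apply: eq_bigr => ? _); rewrite /= ltensE //= !mulrA.
- by do 2!(apply: big1 => ? _); rewrite /= rtensE // mul0r mulr0.
- by apply: big1 => ? _; rewrite /= ltensE // mulr0 mulr0.
Qed.

Lemma sum_fam21_vvw cf p r s :
  \sum_t cf t * fam21 t [:: inl p; inl r; inr s]
  = qq * \sum_l \sum_m cf (inl (inl (inr (p, l, m)))) * G l m r s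
    + \sum_k cf (inl (inr (k, s))) * a k p r + cf (inr p) * c r s.
Proof.
rewrite sum_mixidx [X in X + _ + _ + _]big1 ?add0r => [|l _]; last first.
  by do 2!(apply: big1 => ? _); rewrite /= rtensE // mul0r mulr0.
congr (_ + _ + _).
- rewrite -(sum_delta_l (fun i => qq * \sum_l \sum_m cf (inl (inl (inr (i, l, m)))) * G l m r s) p).
  apply: eq_bigr => i _; rewrite !mulr_sumr; apply: eq_bigr => l _; rewrite !mulr_sumr.
  by apply: eq_bigr => m _; rewrite /= ltensE //=; ring.
- apply: eq_bigr => k _; rewrite -(sum_delta_r' (fun j => cf (inl (inr (k, j))) * a k p r) s).
  by apply: eq_bigr => j _; rewrite /= rtensE // mulrA.
- rewrite -(sum_delta_l (fun i => cf (inr i) * c r s) p).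
  by apply: eq_bigr => i _; rewrite /= ltensE // mulrCA.
Qed.

Lemma homog_fam21 t : homog 2%N 1%N (fam21 t).
Proof.
case: t => [[[[[l m] n]|[[i l] m]]|[k j]]|i].
- exact: (homog_rtens (x := inl n) (@homog_gen_rel _ L l m)).
- exact: (homog_ltens (x := inl i) (@homog_gen_rel _ L l m)).
- exact: (homog_rtens (x := inr j) (@homog_gen_a _ L k)).
- exact: (homog_ltens (x := inl i) (@homog_gen_c _ L)).
Qed.

Let Smix : pred mixidx := predT.
Let homog21 t (_ : t \in Smix) : homog 2%N 1%N (fam21 t) := homog_fam21 (t := t).

(* Triangularity: the words [w v v], then [v w v], then [v v w] successively
   isolate the four blocks of coefficients. *)
Lemma fam21_free cf : (forall w, \sum_t cf t * fam21 t w = 0) -> forall t, cf t = 0.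
Proof.
move=> H.
have H1 l m n : cf (inl (inl (inl (l, m, n)))) = 0.
  by rewrite -sum_fam21_wvv H.
have H2 p s n : cf (inl (inl (inr (p, s, n)))) = 0.
  have := H [:: inl p; inr s; inl n]; rewrite sum_fam21_vwv big1 ?mulr0 ?add0r // => l _.
  by apply: big1 => m _; rewrite H1 mul0r.
have [H4 H3] : (forall p, cf (inr p) = 0) /\ (forall k s, cf (inl (inr (k, s))) = 0).
  apply: (@aW_Vc_independent _ L) => p r s.
  rewrite -[RHS](H [:: inl p; inl r; inr s]) sum_fam21_vvw.
  rewrite [X in _ = _ * X + _ + _]big1 ?mulr0 ?add0r // => l _.
  by apply: big1 => m _; rewrite H2 mul0r.
by case=> [[[[[l m] n]|[[i l] m]]|[k j]]|i].
Qed.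

Lemma fam21_span_cV n : in_span Smix fam21 (hpart 2%N 1%N (rtens (gen_c L) (inl n))).
Proof.
pose cf (t : mixidx) : R[i] := match t with
  | inl (inl (inr (i, l, m))) => (m == n)%:R * c i l
  | inl (inr (k, j)) => - (qq * om ^+ 2 * b n k j)
  | _ => 0 end.
apply: (in_span_hpart homog21 (E := fun w => \sum_t cf t * fam21 t w)).
  exact: in_span_lincomb.
apply: word21P => [l m n'|p s n'|p r s].
- by rewrite sum_fam21_wvv rtensE //= mul0r.
- rewrite sum_fam21_vwv rtensE //= big1 ?mulr0 ?add0r => [|l _].
    by rewrite mulrC.
  by apply: big1 => m _; rewrite mul0r.
- rewrite sum_fam21_vvw rtensE //= !mul0r addr0.
  have -> : \sum_l \sum_m (m == n)%:R * c p l * G l m r s = \sum_l c p l * G l n r s.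
    apply: eq_bigr => l _; rewrite -(sum_delta_l (fun m => c p l * G l m r s) n).
    by apply: eq_bigr => m _; rewrite eq_sym; ring.
  rewrite cG_ba [X in _ = _ + X](eq_bigr (fun k => - (qq * (om ^+ 2 * (b n k s * a k p r))))).
    by rewrite sumrN -!mulr_sumr addrN.
  by move=> k _; ring.
Qed.

(* The [v v w] coordinates cancel by [aGG_rho], a consequence of [ax12],
   together with [(q + q^-1)^2 rho = 1]. *)
Lemma fam21_span_Wa j k : in_span Smix fam21 (hpart 2%N 1%N (ltens (inr j) (gen_a L k))).
Proof.
pose cf (t : mixidx) : R[i] := match t with
  | inl (inl (inl (l, i, i'))) => (l == j)%:R * a k i i'
  | inl (inl (inr (p, s, i'))) => - (qq * \sum_i a k i i' * G j i p s)
  | inl (inr (k', j')) => (k' == j)%:R * (j' == k)%:R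
  | inr i => B j k i end.
apply: (in_span_hpart homog21 (E := fun w => \sum_t cf t * fam21 t w)).
  exact: in_span_lincomb.
apply: word21P => [l m n|p s n|p r s].
- by rewrite sum_fam21_wvv ltensE.
- rewrite sum_fam21_vwv ltensE //= mul0r.
  have -> : \sum_l \sum_m (l == j)%:R * a k m n * G l m p s = \sum_i a k i n * G j i p s.
    rewrite -(sum_delta_l' (fun l => \sum_i a k i n * G l i p s) j).
    by apply: eq_bigr => l _; rewrite mulr_sumr; apply: eq_bigr => m _; ring.
  by rewrite subrr.
- rewrite sum_fam21_vvw ltensE //= !mul0r.
  have -> : \sum_l \sum_m - (qq * \sum_i a k i m * G j i p l) * G l m r s
            = - qq * (rho * (a j p r * kron k s + B j k p * c r s)).
    by rewrite -aGG_rho !sum3; ring.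
  have -> : \sum_k' (k' == j)%:R * (s == k)%:R * a k' p r = a j p r * kron k s.
    rewrite -(sum_delta_l' (fun k' => a k' p r * kron k s) j).
    by apply: eq_bigr => k' _; rewrite /kron (eq_sym k s); ring.
  transitivity ((1 - qq ^+ 2 * rho) * (a j p r * kron k s + B j k p * c r s)); last by ring.
  by rewrite sqr_qqV_rho subrr mul0r.
Qed.

Lemma fam21_spans : spans_gen_products L Smix fam21 2%N 1%N.
Proof.
move=> g x; case=> [[k ->]|[[m ->]|[->|[l [m ->]]]]]; case: x => [i|j]; split; try hpart_off.
- by apply/(in_span_hpartW homog21)/(in_span_fam fam21 (t := inl (inr (k, j)))).
- exact: fam21_span_Wa.
- exact: fam21_span_cV.
- by apply/(in_span_hpartW homog21)/(in_span_fam fam21 (t := inr i)).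
- by apply/(in_span_hpartW homog21)/(in_span_fam fam21 (t := inl (inl (inl (l, m, i))))).
- by apply/(in_span_hpartW homog21)/(in_span_fam fam21 (t := inl (inl (inr (i, l, m))))).
Qed.

Lemma dim21 : has_dim (I_comp L 2%N 1%N) 66%N.
Proof.
rewrite -card_mixidx; apply: (has_dim_I_comp (S := Smix) (fam := fam21)) => //.
- by case=> [[[[[l m] n]|[[i l] m]]|[k j]]|i] _; [apply: in_I_rtens | apply: in_I_ltens
                                                  | apply: in_I_rtens | apply: in_I_ltens].
- by move=> cf H t _; apply: fam21_free => w; rewrite -[RHS](H w); apply: eq_bigl.
- exact: fam21_spans.
Qed.

Definition fam12 (t : mixidx) : tens R :=
  match t with
  | inl (inl (inl (j, l, m))) => ltens (inr j) (gen_rel L l m)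
  | inl (inl (inr (l, m, s))) => rtens (gen_rel L l m) (inr s)
  | inl (inr (i, m)) => ltens (inl i) (gen_b L m)
  | inr j => rtens (gen_c L) (inr j)
  end.

Lemma sum_fam12_wwv cf j l m :
  \sum_t cf t * fam12 t [:: inr j; inr l; inl m] = cf (inl (inl (inl (j, l, m)))).
Proof.
rewrite sum_mixidx -[RHS]addr0 -[RHS]addr0 -[RHS]addr0; congr (_ + _ + _ + _).
- rewrite -(sum_delta3 (fun j' l' m' => cf (inl (inl (inl (j', l', m'))))) j l m).
  by do 3!(apply: eq_bigr => ? _); rewrite /= ltensE //= !mulrA.
- by do 3!(apply: big1 => ? _); rewrite /= rtensE // mul0r mulr0.
- by do 2!(apply: big1 => ? _); rewrite /= ltensE // mul0r mulr0.
- by apply: big1 => ? _; rewrite /= rtensE // mul0r mulr0.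
Qed.

Lemma sum_fam12_wvw cf l p s :
  \sum_t cf t * fam12 t [:: inr l; inl p; inr s]
  = qq * \sum_l' \sum_m' cf (inl (inl (inl (l, l', m')))) * G l' m' p s
    + cf (inl (inl (inr (l, p, s)))).
Proof.
rewrite sum_mixidx -[RHS]addr0 -[RHS]addr0; congr (_ + _ + _ + _).
- rewrite -(sum_delta_l
    (fun j => qq * \sum_l' \sum_m' cf (inl (inl (inl (j, l', m')))) * G l' m' p s) l).
  apply: eq_bigr => j _; rewrite !mulr_sumr; apply: eq_bigr => l' _; rewrite !mulr_sumr.
  by apply: eq_bigr => m' _; rewrite /= ltensE //=; ring.
- rewrite -(sum_delta3 (fun l' m' s' => cf (inl (inl (inr (l', m', s'))))) l p s).
  by do 3!(apply: eq_bigr => ? _); rewrite /= rtensE.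
- by do 2!(apply: big1 => ? _); rewrite /= ltensE // mul0r mulr0.
- by apply: big1 => ? _; rewrite /= rtensE // mul0r mulr0.
Qed.

Lemma sum_fam12_vww cf p s t :
  \sum_x cf x * fam12 x [:: inl p; inr s; inr t]
  = qq * \sum_l \sum_m cf (inl (inl (inr (l, m, t)))) * G l m p s
    + \sum_m cf (inl (inr (p, m))) * b m s t + cf (inr t) * c p s.
Proof.
rewrite sum_mixidx [X in X + _ + _ + _]big1 ?add0r => [|j _]; last first.
  by do 2!(apply: big1 => ? _); rewrite /= ltensE // mul0r mulr0.
congr (_ + _ + _).
- rewrite mulr_sumr; apply: eq_bigr => l _; rewrite mulr_sumr; apply: eq_bigr => m _.
  rewrite -(sum_delta_r' (fun s' => qq * (cf (inl (inl (inr (l, m, s')))) * G l m p s)) t).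
  by apply: eq_bigr => s' _; rewrite /= rtensE //=; ring.
- rewrite -(sum_delta_l (fun i => \sum_m cf (inl (inr (i, m))) * b m s t) p).
  apply: eq_bigr => i _; rewrite mulr_sumr; apply: eq_bigr => m _.
  by rewrite /= ltensE // mulrCA.
- rewrite -(sum_delta_r' (fun j => cf (inr j) * c p s) t).
  by apply: eq_bigr => j _; rewrite /= rtensE // mulrA.
Qed.

Lemma homog_fam12 t : homog 1%N 2%N (fam12 t).
Proof.
case: t => [[[[[j l] m]|[[l m] s]]|[i m]]|j].
- exact: (homog_ltens (x := inr j) (@homog_gen_rel _ L l m)).
- exact: (homog_rtens (x := inr s) (@homog_gen_rel _ L l m)).
- exact: (homog_ltens (x := inl i) (@homog_gen_b _ L m)).
- exact: (homog_rtens (x := inr j) (@homog_gen_c _ L)).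
Qed.

Let homog12 t (_ : t \in Smix) : homog 1%N 2%N (fam12 t) := homog_fam12 (t := t).

Lemma fam12_free cf : (forall w, \sum_t cf t * fam12 t w = 0) -> forall t, cf t = 0.
Proof.
move=> H.
have H1 j l m : cf (inl (inl (inl (j, l, m)))) = 0.
  by rewrite -sum_fam12_wwv H.
have H2 l p s : cf (inl (inl (inr (l, p, s)))) = 0.
  have := H [:: inr l; inl p; inr s]; rewrite sum_fam12_wvw big1 ?mulr0 ?add0r // => l' _.
  by apply: big1 => m _; rewrite H1 mul0r.
have [H4 H3] : (forall t, cf (inr t) = 0) /\ (forall p m, cf (inl (inr (p, m))) = 0).
  apply: (@cW_Vb_independent _ L) => p s t.
  rewrite -[RHS](H [:: inl p; inr s; inr t]) sum_fam12_vww.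
  rewrite [X in _ = _ * X + _ + _]big1 ?mulr0 ?add0r => [|l _]; last first.
    by apply: big1 => m _; rewrite H2 mul0r.
  by rewrite addrC mulrC.
by case=> [[[[[j l] m]|[[l m] s]]|[i m]]|j].
Qed.

Lemma fam12_span_Wc j : in_span Smix fam12 (hpart 1%N 2%N (ltens (inr j) (gen_c L))).
Proof.
pose cf (t : mixidx) : R[i] := match t with
  | inl (inl (inr (l, m, s))) => (l == j)%:R * c m s
  | inl (inr (i, m)) => - (qq * a j i m)
  | _ => 0 end.
apply: (in_span_hpart homog12 (E := fun w => \sum_t cf t * fam12 t w)).
  exact: in_span_lincomb.
apply: word12P => [j' l m|l p s|p s t].
- by rewrite sum_fam12_wwv ltensE //= mulr0.
- rewrite sum_fam12_wvw ltensE //= big1 ?mulr0 ?add0r => [|l' _]; first by [].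
  by apply: big1 => m _; rewrite mul0r.
- rewrite sum_fam12_vww ltensE //= !mul0r addr0.
  have -> : \sum_l \sum_m (l == j)%:R * c m t * G l m p s = \sum_m c m t * G j m p s.
    rewrite -(sum_delta_l' (fun l => \sum_m c m t * G l m p s) j).
    by apply: eq_bigr => l _; rewrite mulr_sumr; apply: eq_bigr => m _; ring.
  rewrite cG_ab [X in _ = _ + X](eq_bigr (fun m => - (qq * (a j p m * b m s t)))).
    by rewrite sumrN -mulr_sumr addrN.
  by move=> m _; ring.
Qed.

(* Likewise, the [v w w] coordinates cancel by [bGG_rho]. *)
Lemma fam12_span_bV m n : in_span Smix fam12 (hpart 1%N 2%N (rtens (gen_b L m) (inl n))).
Proof.
pose cf (t : mixidx) : R[i] := match t with
  | inl (inl (inl (j, l, m'))) => b m j l * (m' == n)%:R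
  | inl (inl (inr (k, p, s))) => - (qq * \sum_l b m k l * G l n p s)
  | inl (inr (i, m')) => om ^+ 2 * (i == m)%:R * (m' == n)%:R
  | inr k => om * A m n k end.
apply: (in_span_hpart homog12 (E := fun w => \sum_t cf t * fam12 t w)).
  exact: in_span_lincomb.
apply: word12P => [j l m'|l p s|p s t].
- by rewrite sum_fam12_wwv rtensE.
- rewrite sum_fam12_wvw rtensE //= mul0r.
  have -> : \sum_l' \sum_m' b m l l' * (m' == n)%:R * G l' m' p s = \sum_l' b m l l' * G l' n p s.
    apply: eq_bigr => l' _; rewrite -(sum_delta_r (fun m' => b m l l' * G l' m' p s) n).
    by apply: eq_bigr => m' _; ring.
  by rewrite subrr.
- rewrite sum_fam12_vww rtensE //= !mul0r.
  have -> : \sum_l' \sum_m' - (qq * \sum_l b m l' l * G l n m' t) * G l' m' p s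
            = - qq * (rho * (om ^+ 2 * kron p m * b n s t + om * A m n t * c p s)).
    by rewrite -bGG_rho !sum3; ring.
  have -> : \sum_m' om ^+ 2 * (p == m)%:R * (m' == n)%:R * b m' s t = om ^+ 2 * kron p m * b n s t.
    rewrite -(sum_delta_r (fun m' => om ^+ 2 * kron p m * b m' s t) n).
    by apply: eq_bigr => m' _; ring.
  transitivity ((1 - qq ^+ 2 * rho) * (om ^+ 2 * kron p m * b n s t + om * A m n t * c p s)).
    by rewrite sqr_qqV_rho subrr mul0r.
  by ring.
Qed.

Lemma fam12_spans : spans_gen_products L Smix fam12 1%N 2%N.
Proof.
move=> g x; case=> [[k ->]|[[m ->]|[->|[l [m ->]]]]]; case: x => [i|j]; split; try hpart_off.
- exact: fam12_span_bV.
- by apply/(in_span_hpartW homog12)/(in_span_fam fam12 (t := inl (inr (i, m)))).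
- by apply/(in_span_hpartW homog12)/(in_span_fam fam12 (t := inr j)).
- exact: fam12_span_Wc.
- by apply/(in_span_hpartW homog12)/(in_span_fam fam12 (t := inl (inl (inr (l, m, j))))).
- by apply/(in_span_hpartW homog12)/(in_span_fam fam12 (t := inl (inl (inl (j, l, m))))).
Qed.

Lemma dim12 : has_dim (I_comp L 1%N 2%N) 66%N.
Proof.
rewrite -card_mixidx; apply: (has_dim_I_comp (S := Smix) (fam := fam12)) => //.
- by case=> [[[[[j l] m]|[[l m] s]]|[i m]]|j] _; [apply: in_I_ltens | apply: in_I_rtens
                                                  | apply: in_I_ltens | apply: in_I_rtens].
- by move=> cf H t _; apply: fam12_free => w; rewrite -[RHS](H w); apply: eq_bigl.
- exact: fam12_spans.
Qed.

End Mixed.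

Local Close Scope ring_scope.

Theorem lemma5p2 (R : realType) (L : BQD R) :
  has_dim (I_comp L 3 0) 17 /\ has_dim (I_comp L 0 3) 17 /\
  has_dim (I_comp L 2 1) 66 /\ has_dim (I_comp L 1 2) 66.
Proof. by split; [exact: dim30 | split; [exact: dim03 | split; [exact: dim21 | exact: dim12]]]. Qed.
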